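(* Let $\mathcal{G}$ be an undirected graph on $N$ vertices with symmetric weighted adjacency matrix $\mathbf{A}$ having nonnegative entries ($a_{ij}>0$ on edges, $a_{ij}=0$ otherwise, $a_{ii}=0$), weighted degree matrix $\mathbf{D}=\mathrm{diag}(d_{ii})$ with $d_{ii}=\sum_j a_{ij}$, and deformed Laplacian $\mathbf{L}_{\mathrm{DF}}(r)=(\mathbf{D}-\mathbf{I})r^2-\mathbf{A}r+\mathbf{I}$. Then: (a) $\mathbf{L}_{\mathrm{DF}}(r)$ is a regular matrix polynomial and $0$ is never an eigenvalue of it; (b) $1$ is always an eigenvalue of $\mathbf{L}_{\mathrm{DF}}(r)$, with geometric multiplicity equal to the number of connected components of $\mathcal{G}$; (c) the geometric multiplicity of $\infty$ as an eigenvalue of $\mathbf{L}_{\mathrm{DF}}(r)$ equals the number of vertices of (weighted) degree $d_{ii}=1$; in particular $\infty$ is an eigenvalue iff $\mathcal{G}$ has at least one vertex of degree $1$; (d) $-1$ is an eigenvalue of $\mathbf{L}_{\mathrm{DF}}(r)$ if and only if $\mathcal{G}$ has at least one bipartite connected component, and in that case its geometric multiplicity equals the number of bipartite connected components of $\mathcal{G}$.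
   Context: For a square matrix polynomial $\mathbf{P}(r)=\sum_{j=0}^k \mathbf{A}_j r^j$ with $\mathbf{A}_k\neq 0$: it is regular if $\det\mathbf{P}(r)$ is not identically zero; a finite eigenvalue is $r_0\in\mathbb{C}$ with $\det\mathbf{P}(r_0)=0$, with geometric multiplicity $\dim\ker\mathbf{P}(r_0)$; $\infty$ is an eigenvalue if $0$ is an eigenvalue of the reversal polynomial $r^k\mathbf{P}(1/r)$, and its geometric multiplicity is $\dim\ker\mathbf{A}_k$ (for $\mathbf{L}_{\mathrm{DF}}$, $\dim\ker(\mathbf{D}-\mathbf{I})$). A connected component is bipartite if its vertex set splits into two disjoint sets with every edge joining the two sets (isolated vertices count as bipartite components). *)

From HB Require Import structures.
From mathcomp Require Import all_boot all_order all_algebra.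
Set Implicit Arguments. Unset Strict Implicit. Unset Printing Implicit Defensive.
Import Order.TTheory GRing.Theory Num.Theory.
Local Open Scope ring_scope.

Section DeformedLaplacian.
Variables (C : numClosedFieldType) (N : nat) (A : 'M[C]_N).

Definition wdeg (i : 'I_N) : C := \sum_(j < N) A i j.
Definition degmx : 'M[C]_N := \matrix_(i, j) (if i == j then wdeg i else 0).

Definition LDF_poly : 'M[{poly C}]_N :=
  \matrix_(i, j) (((degmx - 1%:M) i j)%:P * 'X^2 - (A i j)%:P * 'X
                  + ((1%:M : 'M[C]_N) i j)%:P).

Definition LDF (r : C) : 'M[C]_N := (r ^+ 2) *: (degmx - 1%:M) - r *: A + 1%:M.

(* reversal polynomial r^2 L_DF(1/r) = (D - I) - A r + I r^2, evaluated at r *)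
Definition LDF_rev (r : C) : 'M[C]_N := (degmx - 1%:M) - r *: A + (r ^+ 2) *: 1%:M.

Definition regular_mxpoly (P : 'M[{poly C}]_N) : Prop := \det P != 0.

Definition is_eigenvalue (r0 : C) : Prop := \det (LDF r0) = 0.

(* dimension of the (column) kernel {v | M v = 0} *)
Definition kerdim (M : 'M[C]_N) : nat := \rank (kermx M^T).

Definition geom_mult (r0 : C) : nat := kerdim (LDF r0).

Definition is_eigenvalue_inf : Prop := \det (LDF_rev 0) = 0.

Definition geom_mult_inf : nat := kerdim (degmx - 1%:M).

Definition edge : rel 'I_N := fun i j => 0 < A i j.

Definition num_components : nat := n_comp edge 'I_N.

Definition bipartite_comp (x : 'I_N) : bool :=
  [exists f : {ffun 'I_N -> bool},
    [forall i, forall j,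
       (connect edge x i && connect edge x j && edge i j) ==> (f i != f j)]].

Definition num_bipartite_components : nat :=
  #|[set x : 'I_N | roots edge x & bipartite_comp x]|.

Definition num_deg_one : nat := #|[set i : 'I_N | wdeg i == 1]|.

End DeformedLaplacian.

From HB Require Import structures.
From mathcomp Require Import all_boot all_order all_algebra.
From mathcomp Require Import ring.
Import Order.TTheory GRing.Theory Num.Theory.
Local Open Scope ring_scope.

(* For r = 1 or r = -1 (so r^2 = 1 and r is real), the i-th entry of
   L_DF(r) u is \sum_j a_ij (u_i - r u_j); pairing with the conjugate of u and
   symmetrising gives \sum_ij a_ij |u_i - r u_j|^2, so u is in the kernel iff
   u_i = r u_j along every edge.  Hence ker L_DF(1) is spanned by the
   indicator vectors of the components, and ker L_DF(-1) by the signed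
   indicator vectors (+1/-1 according to a 2-colouring) of the bipartite
   components, since an alternating vector vanishes on a component with an
   odd cycle.  At infinity the leading coefficient D - I is diagonal, and at
   r = 0 the polynomial is the identity. *)

Section ConnectedComponents.
Context {T : finType} {e : rel T}.

Lemma connect_ind {k} {P : pred T} : P k ->
  (forall i j, connect e k i -> e i j -> P i -> P j) ->
  forall i, connect e k i -> P i.
Proof.
move=> Pk step i /connectP [p].
suff IH x : connect e k x -> P x -> path e x p -> P (last x p).
  by move=> kp ->; apply: IH (connect0 _ _) Pk kp.
elim: p x => [|j p IH] x kx Px //= /andP[xj jp].
by apply: IH jp; [apply: connect_trans kx (connect1 xj) | apply: step xj Px].
Qed.

Hypothesis e_sym : connect_sym e.

Lemma root_connect_roots {k i} : roots e k -> connect e k i -> fingraph.root e i = k.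
Proof. by move=> /eqP rootk /(fingraph.rootP e_sym) <-; rewrite rootk. Qed.

Lemma connect_from_root i : connect e (fingraph.root e i) i.
Proof. by rewrite e_sym connect_root. Qed.

End ConnectedComponents.

Section KernelDimension.
Context {F : fieldType} {n : nat}.

Lemma det_eq0_kermx (M : 'M[F]_n) : \det M = 0 <-> (0 < \rank (kermx M^T))%N.
Proof.
rewrite lt0n mxrank_eq0 kermx_eq0 row_free_unit unitmxE det_tr unitfE.
by split => [->|]; [rewrite eqxx | case: eqP].
Qed.

Lemma rank_kermx_eq_card (M : 'M[F]_n) (S : {set 'I_n}) (v : 'I_n -> 'I_n -> F) :
  (forall r, r \in S -> v r r = 1) ->
  (forall r s, r \in S -> s \in S -> r != s -> v r s = 0) ->
  (forall r, r \in S -> (\row_i v r i) *m M^T = 0) ->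
  (forall u : 'rV_n, u *m M^T = 0 -> u = \sum_(r in S) u 0 r *: \row_i v r i) ->
  \rank (kermx M^T) = #|S|.
Proof.
move=> v1 v0 vker vspan.
pose B : 'M[F]_(#|S|, n) := \matrix_(k, i) v (enum_val k) i.
have rowB k : row k B = \row_i v (enum_val k) i by apply/rowP => i; rewrite !mxE.
have sBK : (B <= kermx M^T)%MS.
  apply/sub_kermxP; apply/row_matrixP => k.
  by rewrite row0 row_mul rowB vker // enum_valP.
have sKB : (kermx M^T <= B)%MS.
  apply/row_subP => k.
  rewrite (vspan (row k (kermx M^T))); last by rewrite -row_mul mulmx_ker row0.
  apply: summx_sub => r Sr; apply: scalemx_sub.
  by rewrite -(enum_rankK_in Sr Sr) -rowB row_sub.
pose E : 'M[F]_(n, #|S|) := \matrix_(i, k) (i == enum_val k)%:R.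
have BE : B *m E = 1%:M.
  apply/matrixP => k l; rewrite !mxE (bigD1 (enum_val l)) //= big1 => [|i ni];
    last by rewrite !mxE (negbTE ni) mulr0.
  rewrite !mxE eqxx mulr1 addr0.
  have [->|nkl] := eqVneq k l; first by rewrite v1 // enum_valP.
  by rewrite v0 ?enum_valP // (contra_neq (@enum_val_inj _ _ _ _)).
apply/eqP; rewrite eqn_leq (leq_trans (mxrankS sKB) (rank_leq_row B)) /=.
by have := mxrankM_maxl B E; rewrite BE mxrank1 => /leq_trans; apply; apply: mxrankS.
Qed.

Context {e : rel 'I_n}.
Hypothesis e_sym : connect_sym e.
Local Notation root := (fingraph.root e).

Definition comp_vec (w : 'I_n -> 'I_n -> F) (k i : 'I_n) : F :=
  if connect e k i then w k i else 0.

Lemma rank_kermx_comp_vec (M : 'M[F]_n) (S : {set 'I_n}) (w : 'I_n -> 'I_n -> F) :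
  (forall k, k \in S -> roots e k) ->
  (forall k, k \in S -> w k k = 1) ->
  (forall k, k \in S -> (\row_i comp_vec w k i) *m M^T = 0) ->
  (forall u : 'rV_n, u *m M^T = 0 ->
     forall i, u 0 i = if root i \in S then u 0 (root i) * w (root i) i else 0) ->
  \rank (kermx M^T) = #|S|.
Proof.
move=> S_roots w1 vker vspan; apply: rank_kermx_eq_card vker _.
- by move=> k Sk; rewrite /comp_vec connect0 w1.
- move=> k l Sk Sl; rewrite /comp_vec; case: ifP => // kl.
  rewrite -(root_connect_roots e_sym (S_roots _ Sk) kl).
  by rewrite (root_connect_roots e_sym (S_roots _ Sl) (connect0 _ _)) eqxx.
- move=> u ker_u; apply/rowP => i; rewrite summxE (vspan u ker_u i).
  have not_root k : k \in S -> k != root i -> connect e k i = false.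
    move=> Sk; apply: contraNF => ki.
    by rewrite (root_connect_roots e_sym (S_roots _ Sk) ki).
  case: ifP => [Sroot|Sroot].
    rewrite (bigD1 (root i)) //= big1 => [|k /andP[Sk nk]]; rewrite !mxE /comp_vec.
      by rewrite connect_from_root // addr0.
    by rewrite not_root ?mulr0.
  rewrite big1 // => k Sk; rewrite !mxE /comp_vec not_root ?mulr0 //.
  by apply: contraFneq Sroot => <-.
Qed.

End KernelDimension.

Section DeformedLaplacian.
Variables (C : numClosedFieldType) (N : nat) (A : 'M[C]_N).
Hypothesis A_sym : A^T = A.
Hypothesis A_ge0 : forall i j, 0 <= A i j.

Lemma A_symE i j : A j i = A i j.
Proof. by rewrite -{1}A_sym mxE. Qed.

Lemma LDF_polyE r : map_mx (horner_eval r) (LDF_poly A) = LDF A r.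
Proof.
apply/matrixP => i j; rewrite !mxE horner_evalE.
by rewrite !hornerD hornerN !hornerCM hornerXn hornerX hornerC; ring.
Qed.

Lemma LDF_at0 : LDF A 0 = 1%:M.
Proof. by rewrite /LDF expr0n !scale0r subrr add0r. Qed.

Lemma LDF_rev_at0 : LDF_rev A 0 = degmx A - 1%:M.
Proof. by rewrite /LDF_rev !scale0r subr0 expr0n scale0r addr0. Qed.

Lemma LDF_poly_regular : regular_mxpoly (LDF_poly A).
Proof.
apply/eqP => det0; have /eqP := det_map_mx (horner_eval (0 : C)) (LDF_poly A).
by rewrite LDF_polyE LDF_at0 det1 det0 rmorph0 oner_eq0.
Qed.

Section KernelAtUnitRoot.
Variable r : C.
Hypotheses (r2 : r ^+ 2 = 1) (r_real : r^* = r).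

Lemma mulmx_LDF_tr (u : 'rV[C]_N) i :
  (u *m (LDF A r)^T) 0 i = \sum_j A i j * (u 0 i - r * u 0 j).
Proof.
have entry j : u 0 j * (LDF A r)^T j i
    = (i == j)%:R * wdeg A i * u 0 j - r * (A i j * u 0 j).
  by rewrite !mxE r2 mul1r; case: (eqVneq i j) => [->|_] /=; ring.
rewrite mxE (eq_bigr _ (fun j _ => entry j)) sumrB -mulr_sumr.
rewrite (bigD1 i) //= big1 => [|j nj]; last by rewrite eq_sym (negbTE nj) !mul0r.
rewrite eqxx mul1r addr0 /wdeg mulr_suml mulr_sumr -sumrB.
by apply: eq_bigr => j _; ring.
Qed.

Lemma LDF_ker_energy (u : 'rV[C]_N) : u *m (LDF A r)^T = 0 ->
  \sum_i \sum_j A i j * ((u 0 i - r * u 0 j) * (u 0 i - r * u 0 j)^*) = 0.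
Proof.
move=> ker_u; pose z i j := u 0 i - r * u 0 j.
have row0 i : \sum_j A i j * z i j = 0 by rewrite -mulmx_LDF_tr ker_u mxE.
(* Each term splits into a half seen from row i and a half seen from row j;
   the remainder is a multiple of r^2 - 1. *)
have split_term i j : A i j * (z i j * (z i j)^*)
    = A i j * z i j * (u 0 i)^* + A j i * z j i * (u 0 j)^*.
  apply/eqP; rewrite (A_symE i j) /z rmorphB rmorphM /= r_real -subr_eq0; apply/eqP.
  transitivity (A i j * (u 0 j)^* * u 0 j * (r ^+ 2 - 1)); first by ring.
  by rewrite r2 subrr mulr0.
under eq_bigr => i _ do under eq_bigr => j _ do rewrite split_term.
rewrite (eq_bigr _ (fun i _ => big_split _ _ _ _ _)) big_split /=.
rewrite [X in _ + X]exchange_big /= -big_split /= big1 // => i _.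
by rewrite -mulr_suml row0 mul0r addr0.
Qed.

Lemma LDF_kerP (u : 'rV[C]_N) :
  u *m (LDF A r)^T = 0 <-> forall i j, edge A i j -> u 0 i = r * u 0 j.
Proof.
split=> [/LDF_ker_energy energy0 i j Aij_gt0|edge_eq]; last first.
  apply/rowP => i; rewrite mulmx_LDF_tr mxE big1 // => j _.
  have := A_ge0 i j; rewrite le0r => /orP[/eqP->|/edge_eq->]; first by rewrite mul0r.
  by rewrite subrr mulr0.
have term_ge0 k l : 0 <= A k l * ((u 0 k - r * u 0 l) * (u 0 k - r * u 0 l)^*).
  by rewrite mulr_ge0 ?mul_conjC_ge0.
have row_i := psumr_eq0P (fun k _ => sumr_ge0 _ (fun l _ => term_ge0 k l)) energy0 (i:=i) isT.
have /eqP := psumr_eq0P (fun l _ => term_ge0 i l) row_i (i:=j) isT.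
by rewrite mulf_eq0 (gt_eqF Aij_gt0) mul_conjC_eq0 subr_eq0 => /eqP.
Qed.

End KernelAtUnitRoot.

Lemma LDF_ker1P (u : 'rV[C]_N) :
  u *m (LDF A 1)^T = 0 <-> forall i j, edge A i j -> u 0 i = u 0 j.
Proof.
rewrite LDF_kerP ?expr1n ?rmorph1 //.
by split=> h i j /h; rewrite mul1r.
Qed.

Lemma LDF_kerN1P (u : 'rV[C]_N) :
  u *m (LDF A (-1))^T = 0 <-> forall i j, edge A i j -> u 0 i = - u 0 j.
Proof.
rewrite LDF_kerP ?sqrrN ?expr1n ?conjCN1 //.
by split=> h i j /h; rewrite mulN1r.
Qed.

Lemma mulmx_degmx_tr (u : 'rV[C]_N) j :
  (u *m (degmx A - 1%:M)^T) 0 j = u 0 j * (wdeg A j - 1).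
Proof.
rewrite mxE (bigD1 j) //= big1 => [|i ni]; last first.
  by rewrite !mxE eq_sym (negbTE ni) subrr mulr0.
by rewrite !mxE eqxx addr0.
Qed.

Lemma geom_mult_inf_deg1 : geom_mult_inf A = num_deg_one A.
Proof.
apply: (@rank_kermx_eq_card _ _ _ _ (fun k i => (k == i)%:R)).
- by move=> k _; rewrite eqxx.
- by move=> k l _ _ /negbTE ->.
- move=> k; rewrite inE => /eqP deg1; apply/rowP => j.
  rewrite mulmx_degmx_tr !mxE; case: (eqVneq k j) => [<-|_]; last by rewrite mul0r.
  by rewrite deg1 subrr mulr0.
- move=> u ker_u; apply/rowP => j; rewrite summxE.
  have /eqP := congr1 (fun v : 'rV[C]_N => v 0 j) ker_u.
  rewrite mulmx_degmx_tr mxE mulf_eq0 subr_eq0.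
  have [degj1 _|degj1] := boolP (wdeg A j == 1); last first.
    rewrite orbF => /eqP->.
    rewrite big1 // => k; rewrite inE => degk1; rewrite !mxE.
    by case: (eqVneq k j) degk1 => [->|_ _]; rewrite ?(negbTE degj1) ?mulr0.
  rewrite (bigD1 j) ?inE //= big1 => [|k /andP[_ /negbTE nkj]];
    by rewrite !mxE ?eqxx ?mulr1 ?addr0 ?nkj ?mulr0.
Qed.

Lemma edge_sym : symmetric (edge A).
Proof. by move=> i j; rewrite /edge A_symE. Qed.

Lemma connect_sym_edge : connect_sym (edge A).
Proof. exact: sym_connect_sym edge_sym. Qed.

Local Notation root := (fingraph.root (edge A)).

Lemma geom_mult1 : geom_mult A 1 = num_components A.
Proof.
have -> : num_components A = #|[set k | roots (edge A) k]|.
  by apply: eq_card => k; rewrite !inE andbT.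
apply: (rank_kermx_comp_vec connect_sym_edge _ _ (fun _ _ => 1))
  => [k|//|k _|u /LDF_ker1P edge_eq i].
- by rewrite inE.
- apply/LDF_ker1P => i j ij; rewrite !mxE /comp_vec.
  by rewrite (same_connect1r connect_sym_edge ij).
rewrite inE (roots_root connect_sym_edge) /= mulr1.
pose k := root i.
apply/eqP; apply: (connect_ind (e := edge A) (P := fun x => u 0 x == u 0 k)) => //.
  by move=> x y _ /edge_eq ->.
exact: connect_from_root connect_sym_edge i.
Qed.

Lemma num_components_gt0 : (0 < N)%N -> (0 < num_components A)%N.
Proof.
move=> N_gt0; apply/card_gt0P; exists (root (Ordinal N_gt0)).
by rewrite !inE (roots_root connect_sym_edge).
Qed.

Definition two_colouring (k : 'I_N) : {ffun 'I_N -> bool} :=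
  odflt [ffun=> false] [pick f : {ffun 'I_N -> bool} |
    [forall i, forall j, (connect (edge A) k i && connect (edge A) k j && edge A i j)
                           ==> (f i != f j)]].

Lemma two_colouringP {k i j} : bipartite_comp A k ->
  connect (edge A) k i -> connect (edge A) k j -> edge A i j ->
  two_colouring k i != two_colouring k j.
Proof.
move=> /existsP [f f_col] ki kj ij; rewrite /two_colouring.
case: pickP => [g /forallP /(_ i) /forallP /(_ j)|/(_ f)]; first by rewrite ki kj ij.
by rewrite f_col.
Qed.

Definition comp_sign (k i : 'I_N) : C :=
  if two_colouring k i == two_colouring k k then 1 else -1.

Lemma comp_sign_edge {k i j} : bipartite_comp A k ->
  connect (edge A) k i -> connect (edge A) k j -> edge A i j ->
  comp_sign k i = - comp_sign k j.
Proof.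
move=> bip ki kj ij; have := two_colouringP bip ki kj ij; rewrite /comp_sign.
by case: (two_colouring k i); case: (two_colouring k j); case: (two_colouring k k);
  rewrite //= opprK.
Qed.

Section AlternatingVector.
Variable u : 'rV[C]_N.
Hypothesis u_alt : forall i j, edge A i j -> u 0 i = - u 0 j.

Lemma alternating_on_bipartite {k i} : bipartite_comp A k ->
  connect (edge A) k i -> u 0 i = comp_sign k i * u 0 k.
Proof.
move=> bip ki; apply/eqP; move: i ki; apply: connect_ind.
  by rewrite /comp_sign eqxx mul1r.
move=> x y kx xy /eqP ux; have ky := connect_trans kx (connect1 xy).
have yx : edge A y x by rewrite edge_sym.
by rewrite (u_alt _ _ yx) ux (comp_sign_edge bip kx ky xy) mulNr opprK.
Qed.

Lemma alternating_eq0 {k i} : u 0 k = 0 -> connect (edge A) k i -> u 0 i = 0.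
Proof.
move=> uk0 ki; apply/eqP; move: i ki; apply: connect_ind; first exact/eqP.
move=> x y _ xy; have yx : edge A y x by rewrite edge_sym.
by rewrite (u_alt _ _ yx) oppr_eq0.
Qed.

Lemma alternating_pm {k i} : connect (edge A) k i -> (u 0 i == u 0 k) || (u 0 i == - u 0 k).
Proof.
move: i; apply: connect_ind; first by rewrite eqxx.
move=> x y _ xy; have yx : edge A y x by rewrite edge_sym.
by rewrite (u_alt _ _ yx) eqr_oppLR eqr_opp orbC.
Qed.

Lemma alternating_off_bipartite {k i} : ~~ bipartite_comp A k ->
  connect (edge A) k i -> u 0 i = 0.
Proof.
(* If u_k != 0, colouring x by [u_x == u_k] properly 2-colours the component. *)
move=> nbip; apply: alternating_eq0; apply/eqP; apply: contraNT nbip => uk_neq0.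
have opp_neq : (- u 0 k == u 0 k) = false by rewrite eqNr (negbTE uk_neq0).
apply/existsP; exists [ffun x => u 0 x == u 0 k].
apply/forallP => x; apply/forallP => y; apply/implyP => /andP[/andP[_ ky] xy].
rewrite !ffunE (u_alt _ _ xy).
by case/orP: (alternating_pm ky) => /eqP->; rewrite ?opprK eqxx ?opp_neq // eq_sym opp_neq.
Qed.

End AlternatingVector.

Lemma geom_multN1 : geom_mult A (-1) = num_bipartite_components A.
Proof.
apply: (rank_kermx_comp_vec connect_sym_edge _ _ comp_sign) => [k|k _|k|u /LDF_kerN1P u_alt i].
- by rewrite inE => /andP[].
- by rewrite /comp_sign eqxx.
- rewrite inE => /andP[_ bip]; apply/LDF_kerN1P => i j ij; rewrite !mxE /comp_vec.
  rewrite -(same_connect1r connect_sym_edge ij); case: ifP => ki; last by rewrite oppr0.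
  have kj : connect (edge A) k j by rewrite -(same_connect1r connect_sym_edge ij).
  exact: comp_sign_edge bip ki kj ij.
rewrite inE (roots_root connect_sym_edge) //=; case: ifP => bip.
  by rewrite (alternating_on_bipartite _ u_alt bip (connect_from_root connect_sym_edge i)) mulrC.
by rewrite (alternating_off_bipartite _ u_alt _ (connect_from_root connect_sym_edge i)) ?bip.
Qed.

End DeformedLaplacian.

Theorem proposition3 (C : numClosedFieldType) (N : nat) (A : 'M[C]_N)
  (hN : (0 < N)%N)
  (hsym : A^T = A)
  (hnonneg : forall i j, 0 <= A i j)
  (hdiag : forall i, A i i = 0) :
  [/\ regular_mxpoly (LDF_poly A) /\ ~ is_eigenvalue A 0,
      is_eigenvalue A 1 /\ geom_mult A 1 = num_components A,
      geom_mult_inf A = num_deg_one A /\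
        (is_eigenvalue_inf A <-> exists i, wdeg A i = 1) &
      (is_eigenvalue A (-1) <-> (0 < num_bipartite_components A)%N) /\
        ((0 < num_bipartite_components A)%N ->
           geom_mult A (-1) = num_bipartite_components A)].
Proof.
have eigenP r : is_eigenvalue A r <-> (0 < geom_mult A r)%N by apply: det_eq0_kermx.
have dim1 := geom_mult1 _ _ _ hsym hnonneg.
have dimN1 := geom_multN1 _ _ _ hsym hnonneg.
split; first split.
- exact: LDF_poly_regular.
- by rewrite /is_eigenvalue LDF_at0 det1 => /eqP; rewrite oner_eq0.
- by rewrite eigenP dim1; split=> //; apply: num_components_gt0.
- split; first exact: geom_mult_inf_deg1.
  rewrite /is_eigenvalue_inf LDF_rev_at0 det_eq0_kermx -/(kerdim _).
  rewrite -/(geom_mult_inf A) geom_mult_inf_deg1.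
  split=> [/card_gt0P [i]|[i deg1]]; first by rewrite inE => /eqP; exists i.
  by apply/card_gt0P; exists i; rewrite inE deg1.
- by rewrite eigenP dimN1.
Qed.
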